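(* Let $\{\mathcal{G}_i:i\in I\}$ be a sliced system. Then for each $i\in I$ there exist functions $h^-_i,h^+_i\in C(\mathbb{R},\mathbb{R}^* )$ such that $\mathcal{G}_i\subseteq(h^-_i,h^+_i)$ and $h^+_i\le h^-_j$ whenever $i<j$.
   Context: $\mathbb{R}^*=\mathbb{R}\cup\{-\infty,\infty\}$ with its usual order topology; for $f,h\in C(\mathbb{R},\mathbb{R}^* )$, $f\le h$ means $f(x)\le h(x)$ for all $x$, and $(f,h)=\{g\in C(\mathbb{R},\mathbb{R}):(\forall x)\,f(x)<g(x)<h(x)\}$. Let $(I,<)$ be a linearly ordered set and for each $i\in I$ let $\mathcal{G}_i\subseteq C(\mathbb{R},\mathbb{R})$ be nonempty. The indexed system $\{\mathcal{G}_i:i\in I\}$ is sliced if for every $i\in I$ there exist $g^-_i,g^+_i\in C(\mathbb{R},\mathbb{R}^* )$ with $\bigcup_{j<i}\mathcal{G}_j\subseteq(-\infty,g^-_i)$, $\mathcal{G}_i\subseteq(g^-_i,g^+_i)$, and $\bigcup_{j>i}\mathcal{G}_j\subseteq(g^+_i,\infty)$. *)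

From HB Require Import structures.
From mathcomp Require Import all_boot all_order all_algebra.
From mathcomp Require Import all_classical all_reals all_analysis.
Set Implicit Arguments. Unset Strict Implicit. Unset Printing Implicit Defensive.
Import Order.TTheory GRing.Theory Num.Theory numFieldNormedType.Exports.
Local Open Scope ring_scope.
Local Open Scope ereal_scope.

(* The extended reals are \bar R (with their order topology).
   C(R, extended R) : functions f : R -> \bar R with [continuous f].
   C(R,R)   : functions g : R -> R with [continuous g]. *)

Definition fun_interval (R : realType) (f h : R -> \bar R) : set (R -> R) :=
  [set g : R -> R | continuous g /\ forall x : R, f x < (g x)%:E < h x].

Definition fle (R : realType) (f h : R -> \bar R) : Prop := forall x, f x <= h x.

Definition sliced (R : realType) (d : Order.disp_t) (I : orderType d)
    (G : I -> set (R -> R)) : Prop :=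
  forall i : I, exists gm gp : R -> \bar R,
    continuous gm /\ continuous gp /\
    (forall j, (j < i)%O -> (G j `<=` fun_interval (fun _ => -oo) gm)%classic) /\
    (G i `<=` fun_interval gm gp)%classic /\
    (forall j, (i < j)%O -> (G j `<=` fun_interval gp (fun _ => +oo)))%classic.

From HB Require Import structures.
From mathcomp Require Import all_boot all_order all_algebra.
From mathcomp Require Import all_classical all_reals all_analysis.
Import Order.TTheory GRing.Theory Num.Theory numFieldNormedType.Exports.
Local Open Scope ring_scope.

(* Keep the lower slicing functions [h^-_i := g^-_i].  For the upper ones,
   [g^+_i] already works against every [j] separated from [i] by some [k],
   since a member of the nonempty [G_k] runs strictly between [g^+_i] and
   [g^-_j].  The only index not separated from [i] is its immediate successor
   [s], if any, and then [h^+_i := min (g^+_i, g^-_s)] is still continuous and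
   still lies above [G_i]. *)

Lemma succ_or_dense {d} {I : orderType d} (i : I) :
  (exists2 s : I, (i < s)%O & forall k, (i < k)%O -> (s <= k)%O) \/
  (forall j, (i < j)%O -> exists2 k, (i < k)%O & (k < j)%O).
Proof.
have [dense|] := pselect (forall j, (i < j)%O -> exists2 k, (i < k)%O & (k < j)%O).
  by right.
move=> /existsNP[s /not_implyP[i_s no_between]]; left; exists s => // k ik.
by rewrite leNgt; apply/negP => ks; apply: no_between; exists k.
Qed.

Section upper_slices.
Set Implicit Arguments.
Unset Strict Implicit.
Local Open Scope classical_set_scope.
Local Open Scope ereal_scope.
Variables (R : realType) (d : Order.disp_t) (I : orderType d).
Variable G : I -> set (R -> R).
Hypothesis G_neq0 : forall i, G i !=set0.
Variables gm gp : I -> R -> \bar R.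
Hypothesis gm_cont : forall i, continuous (gm i).
Hypothesis gp_cont : forall i, continuous (gp i).
Hypothesis G_below_gm :
  forall i j, (j < i)%O -> G j `<=` fun_interval (fun _ => -oo) (gm i).
Hypothesis G_between : forall i, G i `<=` fun_interval (gm i) (gp i).
Hypothesis G_above_gp :
  forall i j, (i < j)%O -> G j `<=` fun_interval (gp i) (fun _ => +oo).

Lemma gp_lt_gm i k j x : (i < k)%O -> (k < j)%O -> gp i x < gm j x.
Proof.
move=> ik kj; have [g Gkg] := G_neq0 k.
have [_ /(_ x) /andP[gp_g _]] := G_above_gp ik Gkg.
have [_ /(_ x) /andP[_ g_gm]] := G_below_gm kj Gkg.
exact: lt_trans gp_g g_gm.
Qed.

Lemma exists_upper_slice i : exists h : R -> \bar R,
  [/\ continuous h, G i `<=` fun_interval (gm i) h &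
      forall j, (i < j)%O -> fle h (gm j)].
Proof.
have [[s i_s s_min]|dense] := succ_or_dense i.
  exists (gp i \min gm s); split.
  - exact: min_fun_continuous.
  - move=> g Gig; have [g_cont g_in] := G_between Gig; split=> // x.
    have /andP[-> g_gp] := g_in x.
    have [_ /(_ x) /andP[_ g_gm]] := G_below_gm i_s Gig.
    by rewrite /= lt_min g_gp g_gm.
  - move=> j ij x /=; have := s_min j ij; rewrite le_eqVlt => /orP[/eqP <-|sj].
      by rewrite ge_min lexx orbT.
    by rewrite ge_min (ltW (gp_lt_gm x i_s sj)).
exists (gp i); split=> // j ij x.
by have [k ik kj] := dense j ij; exact: ltW (gp_lt_gm x ik kj).
Qed.

End upper_slices.

Theorem lemma5p3 (R : realType) (d : Order.disp_t) (I : orderType d)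
    (G : I -> set (R -> R))
    (HGcont : forall i (g : R -> R), G i g -> continuous g)
    (HGne : forall i, (G i !=set0)%classic)
    (Hsl : sliced G) :
  exists hm hp : I -> R -> \bar R,
    (forall i, continuous (hm i) /\ continuous (hp i) /\
               (G i `<=` fun_interval (hm i) (hp i))%classic) /\
    (forall i j : I, (i < j)%O -> fle (hp i) (hm j)).
Proof.
have /choice[gm /choice[gp slicing]] := Hsl.
have gm_cont i : continuous (gm i) by case: (slicing i).
have gp_cont i : continuous (gp i) by case: (slicing i) => _ [].
have G_below_gm i j : (j < i)%O ->
    (G j `<=` fun_interval (fun=> -oo%E) (gm i))%classic.
  by case: (slicing i) => _ [_ [below _]]; exact: below.
have G_between i : (G i `<=` fun_interval (gm i) (gp i))%classic.
  by case: (slicing i) => _ [_ [_ [between _]]].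
have G_above_gp i j : (i < j)%O ->
    (G j `<=` fun_interval (gp i) (fun=> +oo%E))%classic.
  by case: (slicing i) => _ [_ [_ [_ above]]]; exact: above.
have /choice[hp upper] :=
  exists_upper_slice HGne gm_cont gp_cont G_below_gm G_between G_above_gp.
exists gm, hp; split=> [i|i j ij]; have [hp_cont G_in hp_le] := upper i.
  by split; [exact: gm_cont | split].
exact: hp_le.
Qed.
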